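(* Let $G$ be a graph of order $n$ with minimum degree $\delta\geq 1$, let $\mu=\mu(G)$, and let $(x_1,\ldots,x_n)$ be a nonnegative unit eigenvector of the adjacency matrix of $G$ for the eigenvalue $\mu$. If $u$ is a vertex with $x_u=\min\{x_1,\ldots,x_n\}$, then \[ \mu(G-u)\geq\mu\left(1-\frac{1}{\mu^2/\delta+n-\delta-1}\right). \]
   Context: All graphs are finite and simple; $\mu(G)$ denotes the largest eigenvalue of the adjacency matrix of $G$; $G-u$ is the graph obtained by deleting vertex $u$; the eigenvector is indexed by the vertices of $G$. *)

From HB Require Import structures.
From mathcomp Require Import all_boot all_order all_algebra.
From mathcomp Require Import reals.
Set Implicit Arguments. Unset Strict Implicit. Unset Printing Implicit Defensive.
Import Order.TTheory GRing.Theory Num.Theory.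
Local Open Scope ring_scope.

Definition simple_graph (m : nat) (e : rel 'I_m) : Prop :=
  symmetric e /\ irreflexive e.

Definition adjmx (R : ringType) (m : nat) (e : rel 'I_m) : 'M[R]_m :=
  \matrix_(i, j) (e i j)%:R.

Definition deg (m : nat) (e : rel 'I_m) (v : 'I_m) : nat := #|[set w | e v w]|.
Definition mindeg (m : nat) (e : rel 'I_m.+1) : nat :=
  \big[minn/m.+1]_(v : 'I_m.+1) deg e v.

Definition largest_eigenvalue (F : numFieldType) (m : nat) (A : 'M[F]_m) (mu : F) : Prop :=
  eigenvalue A mu /\ (forall a, eigenvalue A a -> a <= mu).

Definition del_vertex_adj (R : ringType) (m : nat) (A : 'M[R]_m.+1) (u : 'I_m.+1) : 'M[R]_m :=
  row' u (col' u A).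

From HB Require Import structures.
From mathcomp Require Import all_boot all_order all_algebra.
From mathcomp Require Import reals classical_sets.
From mathcomp Require Import ring lra.
Import Order.TTheory GRing.Theory Num.Theory.
Local Open Scope ring_scope.
Set Implicit Arguments. Unset Strict Implicit. Unset Printing Implicit Defensive.

(* Let m := x_u^2 and let w be a vertex of minimum degree d.  The entries of x
   on the neighbours of w sum to mu x_w, so by Cauchy-Schwarz their squares sum
   to at least mu^2 x_w^2 / d >= mu^2 m / d, while each of the n - d other
   vertices contributes at least m; hence m (mu^2/d + n - d) <= 1.  Deleting the
   entry u of x gives a vector y with |y|^2 = 1 - m and y^T A(G-u) y =
   mu (1 - 2m), so the Rayleigh bound gives
   mu(G-u) >= mu (1 - 2m) / (1 - m) >= mu (1 - 1/(mu^2/d + n - d - 1)). *)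

Section RealInequalities.
Variable R : realFieldType.

Lemma sqr_le_discr (a b c : R) : 0 <= c ->
  (forall t, 0 <= a + t * (b + b) + t ^+ 2 * c) -> b ^+ 2 <= a * c.
Proof.
move=> c_ge0 pos; have [c0|c_neq0] := eqVneq c 0.
  rewrite c0 mulr0 in pos *.
  have [->|b_neq0] := eqVneq b 0; first by rewrite expr2 mulr0.
  have := pos (- (a + 1) / (b + b)); rewrite mulr0 addr0 mulfVK; first lra.
  by rewrite -mulr2n mulrn_eq0.
have c_gt0 : 0 < c by rewrite lt_def c_neq0.
rewrite -subr_ge0.
have -> : a * c - b ^+ 2 = c * (a + (- b / c) * (b + b) + (- b / c) ^+ 2 * c).
  by field.
exact: mulr_ge0.
Qed.

Lemma sqr_sum_le_card (I : finType) (P : pred I) (a : I -> R) :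
  (\sum_(i | P i) a i) ^+ 2 <= #|P|%:R * \sum_(i | P i) a i ^+ 2.
Proof.
rewrite -sqrrN mulrC; apply: sqr_le_discr => // t.
have -> : \sum_(i | P i) a i ^+ 2 + t * (- \sum_(i | P i) a i - \sum_(i | P i) a i)
    + t ^+ 2 * #|P|%:R = \sum_(i | P i) (a i - t) ^+ 2.
  have -> : #|P|%:R = \sum_(i | P i) 1 :> R by rewrite sumr_const.
  rewrite -sumrN -big_split mulr_sumr mulr_sumr -!big_split /=.
  by apply: eq_bigr => i _; ring.
by rewrite sumr_ge0 // => i _; apply: sqr_ge0.
Qed.

End RealInequalities.

Section BilinearForms.
Variables (R : realFieldType) (k : nat).
Implicit Types (M N : 'M[R]_k) (v w : 'cV[R]_k).

Definition bform M v w : R := (v^T *m M *m w) ord0 ord0.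

Lemma bformE M v w : bform M v w = \sum_i \sum_j v i ord0 * M i j * w j ord0.
Proof.
rewrite /bform mxE exchange_big /=; apply: eq_bigr => j _.
by rewrite mxE mulr_suml; apply: eq_bigr => i _; rewrite !mxE.
Qed.

Lemma bform1E w : bform 1%:M w w = \sum_i w i ord0 ^+ 2.
Proof. by rewrite /bform mulmx1 mxE; apply: eq_bigr => i _; rewrite mxE expr2. Qed.

Lemma bform1_ge0 w : 0 <= bform 1%:M w w.
Proof. by rewrite bform1E sumr_ge0 // => i _; apply: sqr_ge0. Qed.

Lemma bform1_eq0 w : (bform 1%:M w w == 0) = (w == 0).
Proof.
apply/idP/eqP => [|->]; last by rewrite /bform mulmx0 mxE.
rewrite bform1E psumr_eq0 => [/allP w0|i _]; last exact: sqr_ge0.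
apply/matrixP => i j; rewrite ord1 mxE.
by have /(_ (mem_index_enum _))/= := w0 i; rewrite sqrf_eq0 => /eqP.
Qed.

Lemma bform_eq0_of_bform1 M w : bform 1%:M w w = 0 -> bform M w w = 0.
Proof. by move/eqP; rewrite bform1_eq0 => /eqP->; rewrite /bform !mulmx0 mxE. Qed.

Lemma bform_eigenvector M v mu :
  M *m v = mu *: v -> bform M v v = mu * bform 1%:M v v.
Proof. by move=> v_eig; rewrite /bform -mulmxA v_eig -scalemxAr mulmx1 mxE. Qed.

Lemma bformC M v w : M^T = M -> bform M v w = bform M w v.
Proof.
move=> sM; have tr11 (P : 'M[R]_1) : P ord0 ord0 = P^T ord0 ord0 by rewrite mxE.
by rewrite /bform tr11 !trmx_mul !trmxK sM mulmxA.
Qed.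

Lemma bformDZ M v w t :
  bform M (v + t *: w) (v + t *: w) =
  bform M v v + t * (bform M v w + bform M w v) + t ^+ 2 * bform M w w.
Proof.
rewrite /bform [(v + _)^T]linearD /= [(t *: w)^T]linearZ /=.
rewrite !mulmxDl !mulmxDr -!scalemxAl -!scalemxAr !mxE; ring.
Qed.

Lemma bform_CauchySchwarz M v w : M^T = M -> (forall z, 0 <= bform M z z) ->
  bform M v w ^+ 2 <= bform M v v * bform M w w.
Proof.
move=> sM psd; apply: sqr_le_discr => // t.
by rewrite {2}(bformC v w sM) -bformDZ.
Qed.

Lemma bform_le_bform1 N :
  exists2 C, 0 <= C & forall w, `|bform N w w| <= C * bform 1%:M w w.
Proof.
exists (\sum_i \sum_j `|N i j|) => [|w]; first by do 2!(apply: sumr_ge0 => ? _).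
have sqr_le_sum i : w i ord0 ^+ 2 <= bform 1%:M w w.
  by rewrite bform1E (bigD1 i) //= lerDl sumr_ge0 // => j _; apply: sqr_ge0.
rewrite bformE mulr_suml; apply: le_trans (ler_norm_sum _ _ _) _.
apply: ler_sum => i _; rewrite mulr_suml; apply: le_trans (ler_norm_sum _ _ _) _.
apply: ler_sum => j _; rewrite !normrM mulrAC [_ * `|N i j|]mulrC.
apply: ler_wpM2l => //; have := sqr_le_sum i; have := sqr_le_sum j.
rewrite -!(real_normK (num_real (w _ _))); nra.
Qed.

Lemma psd_unitmx_coercive M : M^T = M -> (forall z, 0 <= bform M z z) ->
  M \in unitmx ->
  exists2 D, 0 <= D & forall w,
    bform 1%:M w w ^+ 2 <= D * bform 1%:M w w * bform M w w.
Proof.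
move=> sM psd Mu; have [D D_ge0 HD] := bform_le_bform1 (invmx M)^T.
exists D => // w; pose v := (invmx M)^T *m w.
have vMw : bform M v w = bform 1%:M w w.
  by rewrite /bform /v trmx_mul trmxK -(mulmxA w^T _ M) mulVmx.
have vMv : bform M v v = bform (invmx M)^T w w.
  rewrite /bform /v trmx_mul trmxK !mulmxA -(mulmxA w^T _ M) mulVmx //.
  by rewrite mulmx1 -mulmxA.
rewrite -[X in X ^+ 2]vMw; apply: le_trans (bform_CauchySchwarz v w sM psd) _.
rewrite vMv.
by rewrite ler_wpM2r // (le_trans (ler_norm _)).
Qed.

End BilinearForms.

(* [lam] is the supremum of the Rayleigh quotients of [B].  Were [lam%:M - B]
   invertible, it would be coercive by [psd_unitmx_coercive], which contradicts
   the quotients coming arbitrarily close to [lam]. *)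
Lemma eigenvalue_ge_rayleigh (R : realType) k (B : 'M[R]_k) y : B^T = B ->
  0 < bform 1%:M y y ->
  exists2 lam, eigenvalue B lam & bform B y y <= lam * bform 1%:M y y.
Proof.
move=> sB y_gt0; have [C _ HC] := bform_le_bform1 B.
pose E := [set bform B w w / bform 1%:M w w
            | w in [set w : 'cV[R]_k | 0 < bform 1%:M w w]]%classic.
have E_sup : has_sup E.
  split; first by exists (bform B y y / bform 1%:M y y), y.
  by exists C => _ [w w_gt0 <-]; rewrite ler_pdivrMr // (le_trans (ler_norm _)).
set lam := sup E.
have ub w : bform B w w <= lam * bform 1%:M w w.
  have [w0|w_neq0] := eqVneq (bform 1%:M w w) 0.
    by rewrite w0 mulr0 bform_eq0_of_bform1.
  rewrite -ler_pdivrMr ?lt_def ?w_neq0 ?bform1_ge0 //.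
  by apply: sup_upper_bound E_sup _ _; exists w; rewrite //= lt_def w_neq0 bform1_ge0.
exists lam => //; pose M := lam%:M - B.
have bformM w : bform M w w = lam * bform 1%:M w w - bform B w w.
  by rewrite /bform /M mulmxBr mulmxBl mul_mx_scalar -scalemxAl mulmx1 !mxE.
have M_psd z : 0 <= bform M z z by rewrite bformM subr_ge0.
have M_sym : M^T = M by rewrite /M linearB /= tr_scalar_mx sB.
apply/eigenvalueP; have [/det0P [v v_neq0 vM]|] := boolP (\det M == 0).
  exists v => //; move/eqP: vM.
  by rewrite mulmxBr mul_mx_scalar subr_eq0 => /eqP <-.
rewrite -unitfE -unitmxE => M_unit; exfalso.
have [D D_ge0 HD] := psd_unitmx_coercive M_sym M_psd M_unit.
have eps_gt0 : 0 < (D + 1)^-1 by rewrite invr_gt0 ltr_wpDl.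
have [_ [w /= w_gt0 <-] near_sup] := sup_adherent eps_gt0 E_sup.
set s := bform 1%:M w w in w_gt0 near_sup.
have M_small : bform M w w < (D + 1)^-1 * s.
  by rewrite bformM -/s; move: near_sup; rewrite -/lam ltr_pdivlMr // mulrBl; lra.
have s_le : s <= D * bform M w w.
  by have := HD w; rewrite expr2 mulrAC ler_pM2r.
have := ler_wpM2l D_ge0 (ltW M_small).
have -> : D * ((D + 1)^-1 * s) = s - (D + 1)^-1 * s.
  by field; rewrite gt_eqF // ltr_wpDl.
have : 0 < (D + 1)^-1 * s by rewrite mulr_gt0.
lra.
Qed.

Lemma bform_le_largest_eigenvalue (R : realType) k (B : 'M[R]_k) mu y :
  B^T = B -> largest_eigenvalue B mu -> bform B y y <= mu * bform 1%:M y y.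
Proof.
move=> sB [_ mu_max]; have [y0|y_neq0] := eqVneq (bform 1%:M y y) 0.
  by rewrite y0 mulr0 bform_eq0_of_bform1.
have y_gt0 : 0 < bform 1%:M y y by rewrite lt_def y_neq0 bform1_ge0.
have [lam /mu_max lam_le ray] := eigenvalue_ge_rayleigh sB y_gt0.
by rewrite (le_trans ray) // ler_pM2r.
Qed.

Lemma trmx_del_vertex_adj (R : nzRingType) n (A : 'M[R]_n.+1) u :
  A^T = A -> (del_vertex_adj A u)^T = del_vertex_adj A u.
Proof. by move=> sA; apply/matrixP => i j; rewrite !mxE -[A in LHS]sA mxE. Qed.

Lemma bform_del_vertex_adj (R : realFieldType) n (A : 'M[R]_n.+1) x u :
  A^T = A ->
  bform (del_vertex_adj A u) (row' u x) (row' u x) =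
  bform A x x - 2 * x u ord0 * (A *m x) u ord0 + A u u * x u ord0 ^+ 2.
Proof.
move=> sA; have A_sym i j : A i j = A j i by rewrite -[A in LHS]sA mxE.
rewrite !bformE mxE; set S := \sum_j A u j * _.
have S_split :
    S = A u u * x u ord0 + \sum_(j < n) A u (lift u j) * x (lift u j) ord0.
  by rewrite /S (bigD1_ord u).
have row_u : \sum_j x u ord0 * A u j * x j ord0 = x u ord0 * S.
  by rewrite /S mulr_sumr; apply: eq_bigr => j _; rewrite mulrA.
have col_u : \sum_(i < n) x (lift u i) ord0 * A (lift u i) u * x u ord0 =
    x u ord0 * (S - A u u * x u ord0).
  rewrite S_split addrC addKr mulr_sumr; apply: eq_bigr => i _.
  by rewrite [A _ u]A_sym; ring.
rewrite (bigD1_ord u) //= row_u.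
under [in RHS]eq_bigr do rewrite (bigD1_ord u) //=.
rewrite big_split /= col_u.
set T := \sum_(i < n) \sum_(j < n) x (lift u i) ord0 * _ * _.
have -> : \sum_(i < n) \sum_(j < n)
    row' u x i ord0 * del_vertex_adj A u i j * row' u x j ord0 = T.
  by apply: eq_bigr => i _; apply: eq_bigr => j _; rewrite !mxE.
ring.
Qed.

Lemma bform1_row' (R : realFieldType) n (x : 'cV[R]_n.+1) u :
  bform 1%:M (row' u x) (row' u x) = bform 1%:M x x - x u ord0 ^+ 2.
Proof.
rewrite !bform1E (bigD1_ord u) //= addrC addrK.
by apply: eq_bigr => i _; rewrite mxE.
Qed.

Section Degrees.
Variables (n : nat) (e : rel 'I_n.+1).

Lemma deg_le_order v : irreflexive e -> (deg e v <= n)%N.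
Proof.
move=> e_irr; apply: (@leq_trans #|[set~ v]|); last by rewrite cardsC1 card_ord.
apply: subset_leq_card; apply/fintype.subsetP => w; rewrite !inE.
by apply: contraTneq => ->; rewrite e_irr.
Qed.

Lemma mindeg_le_deg v : (mindeg e <= deg e v)%N.
Proof.
rewrite /mindeg; elim: (index_enum _) (mem_index_enum v) => //= w s IHs.
rewrite inE big_cons => /predU1P[<-|/IHs]; first exact: geq_minl.
by rewrite geq_min => ->; rewrite orbT.
Qed.

Lemma mindeg_attained : exists v, deg e v = mindeg e.
Proof.
have [mindeg_max|//] : mindeg e = n.+1 \/ exists v, deg e v = mindeg e.
  rewrite /mindeg; apply: (big_ind (fun m => m = n.+1 \/ exists v, deg e v = m)).
  - by left.
  - by move=> a b Ha Hb; rewrite /minn; case: ltnP.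
  - by move=> v _; right; exists v.
exists ord0; apply/eqP; rewrite eqn_leq mindeg_le_deg mindeg_max andbT.
by rewrite (leq_trans (max_card _)) ?card_ord.
Qed.

End Degrees.

Section AdjacencyMatrix.
Variables (R : realFieldType) (n : nat) (e : rel 'I_n.+1).
Local Notation A := (adjmx R e).

Lemma adjmx_mulE (x : 'cV[R]_n.+1) z :
  (A *m x) z ord0 = \sum_(j | e z j) x j ord0.
Proof.
rewrite mxE [RHS]big_mkcond /=; apply: eq_bigr => j _.
by rewrite mxE; case: (e z j); rewrite ?mul1r ?mul0r.
Qed.

Lemma trmx_adjmx : symmetric e -> A^T = A.
Proof. by move=> e_sym; apply/matrixP => i j; rewrite !mxE e_sym. Qed.

Lemma adjmx_diag0 : irreflexive e -> forall u, A u u = 0.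
Proof. by move=> e_irr u; rewrite mxE e_irr. Qed.

Variables (mu : R) (x : 'cV[R]_n.+1).
Hypotheses (x_ge0 : forall i, 0 <= x i ord0) (x_eig : A *m x = mu *: x).

Lemma eigenvalue_gt0_of_nonneg_eigenvector :
  symmetric e -> (1 <= mindeg e)%N -> x != 0 -> 0 < mu.
Proof.
move=> e_sym d_ge1 x_neq0.
have [v xv_gt0] : exists v, 0 < x v ord0.
  apply/existsP; apply: contraNT x_neq0; rewrite negb_exists => /forallP x_le0.
  apply/eqP/matrixP => i j; rewrite ord1 mxE.
  by apply/eqP; rewrite eq_le x_ge0 andbT leNgt x_le0.
have : (0 < deg e v)%N by apply: leq_trans d_ge1 (mindeg_le_deg e v).
rewrite card_gt0 => /set0Pn [z]; rewrite inE => evz.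
have xv_le : x v ord0 <= mu * x z ord0.
  have -> : mu * x z ord0 = (A *m x) z ord0 by rewrite x_eig mxE.
  rewrite adjmx_mulE (bigD1 v) 1?e_sym //= lerDl.
  by rewrite sumr_ge0 // => j _; apply: x_ge0.
rewrite ltNge; apply/negP => mu_le0.
have : mu * x z ord0 <= 0 by rewrite mulr_le0_ge0.
lra.
Qed.

Lemma sqr_min_entry_le (u w : 'I_n.+1) :
  \sum_i x i ord0 ^+ 2 = 1 -> (forall v, x u ord0 <= x v ord0) -> (0 < deg e w)%N ->
  x u ord0 ^+ 2 * (mu ^+ 2 / (deg e w)%:R + (n.+1 - deg e w)%:R) <= 1.
Proof.
move=> x_sum x_min d_gt0; set d := deg e w.
have d_pos : 0 < d%:R :> R by rewrite ltr0n.
have sqr_min_le v : x u ord0 ^+ 2 <= x v ord0 ^+ 2.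
  by rewrite ler_sqr ?nnegrE ?x_ge0.
have card_nbr : #|e w| = d by rewrite /d /deg cardsE.
have card_nonnbr : #|[predC e w]| = (n.+1 - d)%N.
  by rewrite -[in RHS](card_ord n.+1) -(cardC (e w)) card_nbr addKn.
have nbr_sum : \sum_(v | e w v) x v ord0 = mu * x w ord0.
  by rewrite -adjmx_mulE x_eig mxE.
have nbr_bound :
    x u ord0 ^+ 2 * (mu ^+ 2 / d%:R) <= \sum_(v | e w v) x v ord0 ^+ 2.
  rewrite mulrA ler_pdivrMr //; apply: (@le_trans _ _ ((mu * x w ord0) ^+ 2)).
    by rewrite exprMn mulrC ler_wpM2l ?sqr_ge0.
  by rewrite -nbr_sum -card_nbr mulrC sqr_sum_le_card.
have nonnbr_bound :
    x u ord0 ^+ 2 * (n.+1 - d)%:R <= \sum_(v | ~~ e w v) x v ord0 ^+ 2.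
  rewrite -card_nonnbr mulr_natr -sumr_const.
  by apply: ler_sum => v _; apply: sqr_min_le.
move: x_sum; rewrite (bigID (e w)) /= mulrDr; lra.
Qed.
End AdjacencyMatrix.

Lemma one_sub_inv_le_ratio (R : realFieldType) (mu mu' m Q : R) :
  0 < mu -> 0 < Q -> 0 <= m -> m * (Q + 1) <= 1 ->
  mu * (1 - 2 * m) <= mu' * (1 - m) -> mu * (1 - 1 / Q) <= mu'.
Proof.
move=> mu_gt0 Q_gt0 m_ge0 m_le ratio; have m_lt1 : 0 < 1 - m by nra.
have -> : mu * (1 - 1 / Q) = mu' - (mu' * Q - mu * Q + mu) / Q.
  by field; rewrite gt_eqF.
by rewrite lerBlDr lerDl divr_ge0 ?(ltW Q_gt0) // -(pmulr_lge0 _ m_lt1); nra.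
Qed.

Theorem lemma3 (R : realType) (n : nat) (e : rel 'I_n.+1)
  (mu mu' : R) (x : 'cV[R]_n.+1) (u : 'I_n.+1) :
  simple_graph e ->
  (1 <= mindeg e)%N ->
  largest_eigenvalue (adjmx R e) mu ->
  (forall i, 0 <= x i ord0) ->
  \sum_i (x i ord0) ^+ 2 = 1 ->
  adjmx R e *m x = mu *: x ->
  (forall v, x u ord0 <= x v ord0) ->
  largest_eigenvalue (del_vertex_adj (adjmx R e) u) mu' ->
  mu * (1 - 1 / (mu ^+ 2 / (mindeg e)%:R + (n.+1)%:R - (mindeg e)%:R - 1)) <= mu'.
Proof.
move=> [e_sym e_irr] d_ge1 _ x_ge0 x_sum x_eig x_min mu'_max.
have A_sym := trmx_adjmx R e_sym.
have x_norm : bform 1%:M x x = 1 by rewrite bform1E.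
have x_neq0 : x != 0 by rewrite -bform1_eq0 x_norm oner_neq0.
have mu_gt0 := eigenvalue_gt0_of_nonneg_eigenvector x_ge0 x_eig e_sym d_ge1 x_neq0.
have [w deg_w] := mindeg_attained e.
have d_le_n : (mindeg e <= n)%N by rewrite -deg_w deg_le_order.
have deg_w_gt0 : (0 < deg e w)%N by rewrite deg_w.
have := sqr_min_entry_le x_ge0 x_eig x_sum x_min deg_w_gt0.
rewrite deg_w natrB ?(leqW d_le_n) // => min_bound.
have := bform_le_largest_eigenvalue (row' u x) (trmx_del_vertex_adj u A_sym) mu'_max.
rewrite bform_del_vertex_adj // bform1_row' (bform_eigenvector x_eig) x_eig mxE.
rewrite adjmx_diag0 // x_norm mul0r addr0 mulr1 => ray.
set d := (mindeg e)%:R in min_bound *; set Q := mu ^+ 2 / d + _ - d - 1.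
have d_gt0 : 0 < d by rewrite ltr0n.
have Q_gt0 : 0 < Q.
  have : 0 < mu ^+ 2 / d by rewrite divr_gt0 ?exprn_gt0.
  have : d <= n%:R by rewrite ler_nat.
  by rewrite /Q -natr1; lra.
apply: (one_sub_inv_le_ratio mu_gt0 Q_gt0 (sqr_ge0 (x u ord0))).
  by rewrite (_ : Q + 1 = mu ^+ 2 / d + ((n.+1)%:R - d)) // /Q; ring.
by rewrite (_ : mu * _ = mu - 2 * x u ord0 * (mu * x u ord0)) //; ring.
Qed.
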